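(* Let $K\ge2$ and $\lambda>0$. Let $\mathbf H=\mathbf M^*=\frac{1}{\sqrt{K-1}}(\mathbf I_K-\frac1K\mathbf J_K)\in\mathbb R^{K\times K}$ with columns $\mathbf h_1,\dots,\mathbf h_K$, and define $L(\mathbf W)=\sum_{n=1}^K-\log\bigl(\mathrm{softmax}(\mathbf W\mathbf h_n)\bigr)_n$ for $\mathbf W\in\mathbb R^{K\times K}$. Consider sign gradient descent with coupled weight decay, $\mathbf W_{t+1}=\mathbf W_t-\eta_t\,\mathrm{sign}\bigl(\nabla L(\mathbf W_t)+\lambda\mathbf W_t\bigr)$, $\mathbf W_0=\mathbf 0$, with $\mathrm{sign}$ acting entrywise, and let $\alpha_t=\langle\mathbf W_t\mathbf W_t^\top,\hat{\mathbf J}\rangle_F$ with $\hat{\mathbf J}=\frac1K\mathbf 1_K\mathbf 1_K^\top$. Then there exists a sequence of learning rates $\eta_t>0$ with $\eta_t\to0$ as $t\to\infty$ such that $\alpha_t\to0$ as $t\to\infty$.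
   Context: $\mathbf I_K$ is the identity, $\mathbf 1_K$ the all-ones vector, $\mathbf J_K=\mathbf 1_K\mathbf 1_K^\top$, $\langle \mathbf A,\mathbf B\rangle_F=\mathrm{Tr}(\mathbf A^\top\mathbf B)$, $\mathrm{softmax}(z)_k=e^{z_k}/\sum_j e^{z_j}$, $\mathrm{sign}(0)=0$. ''Coupled'' weight decay means $\lambda\mathbf W_t$ is added to the gradient inside the sign. *)

From HB Require Import structures.
From mathcomp Require Import all_boot all_order all_algebra.
From mathcomp Require Import all_classical all_reals all_analysis.
Set Implicit Arguments. Unset Strict Implicit. Unset Printing Implicit Defensive.
Import Order.TTheory GRing.Theory Num.Theory.
Local Open Scope ring_scope.

Section Defs.
Variable R : realType.
Variable K : nat.

Definition Jmx : 'M[R]_K := const_mx 1.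
Definition Hmx : 'M[R]_K :=
  (Num.sqrt ((K%:R : R) - 1))^-1 *: (1%:M - (K%:R)^-1 *: Jmx).
Definition hcol (n : 'I_K) : 'cV[R]_K := col n Hmx.

Definition softmax (z : 'cV[R]_K) (k : 'I_K) : R :=
  expR (z k 0) / \sum_(j < K) expR (z j 0).

Definition Lloss (W : 'M[R]_K) : R :=
  \sum_(n < K) - ln (softmax (W *m hcol n) n).

Definition gradL (W : 'M[R]_K) : 'M[R]_K :=
  \matrix_(i, j) (derive1 (fun t : R => Lloss (W + t *: delta_mx i j)) 0).

Definition sign_mx (A : 'M[R]_K) : 'M[R]_K := map_mx Num.sg A.

Fixpoint Wseq (lambda : R) (eta : nat -> R) (t : nat) : 'M[R]_K :=
  match t with
  | O => 0
  | t'.+1 => let W := Wseq lambda eta t' in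
             W - eta t' *: sign_mx (gradL W + lambda *: W)
  end.

Definition frob (A B : 'M[R]_K) : R := \tr (A^T *m B).

Definition Jhat : 'M[R]_K := (K%:R)^-1 *: Jmx.

Definition alpha (lambda : R) (eta : nat -> R) (t : nat) : R :=
  let W := Wseq lambda eta t in frob (W *m W^T) Jhat.

End Defs.

From HB Require Import structures.
From mathcomp Require Import all_boot all_order all_algebra.
From mathcomp Require Import all_classical all_reals all_analysis.
From mathcomp Require Import ring lra.
Import Order.TTheory GRing.Theory Num.Theory.
Import numFieldNormedType.Exports.
Local Open Scope classical_set_scope.
Local Open Scope ring_scope.
Set Implicit Arguments. Unset Strict Implicit.

(* The iterates W_t all have the form a I + b J.  Since J h_n = 0, the gradient
   at such a point is -phi(a) (I - J/K) with phi(a) = c K / (e^(a c) + K - 1),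
   c = 1/sqrt(K-1), so sign descent reduces to a recursion on (a, b) driven by the
   signs of the diagonal entry D and the off-diagonal entry O of grad L + lambda W.
   In one step each of D, O moves by -lambda eta times its own sign, plus a change
   of phi of size at most 4 K eta whose sign never works against that entry.  With
   eta_t = rho c q^t, rho = 1 / (2 lambda + 4 K) and q = 1 - lambda rho, both
   entries thus stay below c q^t.
   Finally alpha_t = (a + K b)^2 and lambda (a + K b) = D + (K - 1) O, so alpha_t
   decays like q^(2t). *)

Section LogSumExp.
Variable R : realType.

Lemma is_derive_affine (p q x : R) : is_derive x 1 (fun t => p + t * q) q.
Proof.
have := is_deriveD (is_derive_cst p x 1) (is_deriveZ q (is_derive_id x (1 : R))).
rewrite add0r [q%:A]mulr1.
by have -> : cst p + q \*: id = (fun t : R => p + t * q) by apply/funext => t /=; rewrite mulrC.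
Qed.

Lemma sumr_expR_gt0 n (z : 'I_n -> R) : (0 < n)%N -> 0 < \sum_(k < n) expR (z k).
Proof.
case: n z => // n z _; rewrite big_ord_recl ltr_pwDl ?expR_gt0 //.
by apply: sumr_ge0 => k _; exact: expR_ge0.
Qed.

Lemma is_derive_logsumexp n (z b : 'I_n -> R) : (0 < n)%N ->
  is_derive (0 : R) 1 (fun t => ln (\sum_(k < n) expR (z k + t * b k)))
    ((\sum_(k < n) expR (z k) * b k) / \sum_(k < n) expR (z k)).
Proof.
move=> n_gt0.
have dexp k : is_derive (0 : R) 1 (fun t => expR (z k + t * b k)) (expR (z k) * b k).
  have := is_derive1_comp (is_derive_expR _) (is_derive_affine (z k) (b k) 0).
  by rewrite mul0r addr0.
have := is_derive_sum dexp; rewrite fct_sumE => dsum.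
have := is_derive1_comp (is_derive1_ln _) dsum.
under eq_bigr do rewrite mul0r addr0.
by rewrite mulrC; apply; exact: sumr_expR_gt0.
Qed.
End LogSumExp.

Section OrdinalSums.
Variables (R : pzSemiRingType) (K : nat).

Lemma sum_indicator (f : 'I_K -> R) (n : 'I_K) : \sum_(l < K) (l == n)%:R * f l = f n.
Proof.
rewrite (bigD1 n) //= big1 ?addr0 => [|l /negbTE ->]; last by rewrite mul0r.
by rewrite eqxx mul1r.
Qed.

Lemma sum_indicator1 (n : 'I_K) : \sum_(l < K) (l == n)%:R = 1 :> R.
Proof. by rewrite -[RHS](sum_indicator (fun=> 1) n); under [RHS]eq_bigr do rewrite mulr1. Qed.

Lemma sumr_const_ord (x : R) : \sum_(l < K) x = K%:R * x.
Proof. by rewrite sumr_const card_ord mulr_natl. Qed.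
End OrdinalSums.

Section SoftmaxGradient.
Variables (R : realType) (K : nat).

Lemma oppr_ln_softmax (z : 'cV[R]_K) (n : 'I_K) :
  - ln (softmax z n) = ln (\sum_(k < K) expR (z k 0)) - z n 0.
Proof.
have K_gt0 : (0 < K)%N := leq_ltn_trans (leq0n n) (ltn_ord n).
by rewrite /softmax ln_div ?posrE ?expR_gt0 ?sumr_expR_gt0 // expRK opprB.
Qed.

Lemma mul_delta_mx_colE (i j k : 'I_K) (v : 'cV[R]_K) :
  (delta_mx i j *m v) k 0 = (k == i)%:R * v j 0.
Proof.
rewrite mxE (bigD1 j) //= big1 ?addr0 => [|l /negbTE l_neq_j]; last first.
  by rewrite mxE l_neq_j andbF mul0r.
by rewrite mxE eqxx andbT.
Qed.

Lemma gradLE (W : 'M[R]_K) (i j : 'I_K) : gradL W i j =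
  \sum_(n < K) (softmax (W *m hcol R n) i - (i == n)%:R) * hcol R n j 0.
Proof.
have K_gt0 : (0 < K)%N := leq_ltn_trans (leq0n i) (ltn_ord i).
rewrite mxE derive1E.
pose z n k : R := (W *m hcol R n) k 0.
pose b (n k : 'I_K) := (k == i)%:R * hcol R n j 0.
have -> : (fun t => Lloss (W + t *: delta_mx i j)) = fun t =>
    \sum_(n < K) (ln (\sum_(k < K) expR (z n k + t * b n k)) - (z n n + t * b n n)).
  apply/funext => t; apply: eq_bigr => n _.
  have zE k : ((W + t *: delta_mx i j) *m hcol R n) k 0 = z n k + t * b n k.
    by rewrite mulmxDl -scalemxAl mxE [in X in _ + X]mxE mul_delta_mx_colE.
  rewrite (oppr_ln_softmax ((W + t *: delta_mx i j) *m hcol R n) n) zE.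
  by under eq_bigr => k _ do rewrite zE.
have dL n : is_derive (0 : R) 1
    (fun t => ln (\sum_(k < K) expR (z n k + t * b n k)) - (z n n + t * b n n))
    ((softmax (W *m hcol R n) i - (i == n)%:R) * hcol R n j 0).
  have dE : (\sum_(k < K) expR (z n k) * b n k) / (\sum_(k < K) expR (z n k)) - b n n =
      (softmax (W *m hcol R n) i - (i == n)%:R) * hcol R n j 0.
    rewrite (bigD1 i) //= big1 => [|k /negbTE k_neq_i]; last by rewrite /b k_neq_i mul0r mulr0.
    by rewrite /b /softmax eqxx eq_sym mul1r addr0 mulrBl mulrAC.
  rewrite -dE; exact: is_deriveB (is_derive_logsumexp (z n) (b n) K_gt0) (@is_derive_affine _ _ _ 0).
have := is_derive_sum dL; rewrite fct_sumE => dsum.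
exact: (@derive_val _ _ _ _ _ _ _ dsum).
Qed.
End SoftmaxGradient.

Section SignStep.
Variable R : realFieldType.

Lemma sgr_bounds (x : R) : -1 <= Num.sg x <= 1.
Proof. by case: sgrP => _; apply/andP; split; lra. Qed.

Lemma sign_step_contraction (X e l eta C m : R) : 0 <= l -> 0 <= eta ->
  (l + C) * eta <= m - l * eta -> `|X| <= m -> `|e| <= C * eta -> 0 <= X * e ->
  `|X - l * eta * Num.sg X - e| <= m - l * eta.
Proof.
move=> l_ge0 eta_ge0 small; rewrite !ler_norml => /andP[? ?] /andP[? ?] Xe_ge0.
have := mulr_ge0 l_ge0 eta_ge0.
by case: sgrP Xe_ge0 => X_sign Xe_ge0 ?; apply/andP; split; nra.
Qed.
End SignStep.

Lemma expR_sub1_le2x (R : realType) (y : R) : 0 <= y <= 1 / 2 -> expR y - 1 <= 2 * y.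
Proof.
move=> /andP[y_ge0 y_le].
have := expR_ge1Dx (- y); have := expR_gt0 y.
have : expR y * expR (- y) = 1 by rewrite -expRD subrr expR0.
nra.
Qed.

Section SimplexETF.
Variables (R : realType) (K : nat).
Hypothesis K_ge2 : (2 <= K)%N.
Local Notation kR := (K%:R : R).
Local Notation c := ((Num.sqrt (kR - 1))^-1).

Lemma natrK_ge2 : 2 <= kR. Proof. by rewrite ler_nat. Qed.

Lemma natrK_neq0 : kR != 0. Proof. by rewrite pnatr_eq0 -lt0n (leq_trans _ K_ge2). Qed.

Lemma c_gt0 : 0 < c.
Proof. by rewrite invr_gt0 sqrtr_gt0 subr_gt0 ltr1n. Qed.

Lemma c_le1 : c <= 1.
Proof.
have one_le_sqrt : 1 <= Num.sqrt (kR - 1).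
  by rewrite -[X in X <= _]sqrtr1 ler_sqrt; have := natrK_ge2; lra.
by rewrite invr_le1 ?unitf_gt0 // (lt_le_trans ltr01).
Qed.

Lemma hcolE (n l : 'I_K) : hcol R n l 0 = c * ((l == n)%:R - kR^-1).
Proof. by rewrite !mxE mulr1. Qed.

Lemma sum_hcol (n : 'I_K) : \sum_(l < K) hcol R n l 0 = 0.
Proof.
under eq_bigr do rewrite hcolE.
by rewrite -mulr_sumr sumrB sum_indicator1 sumr_const_ord mulfV ?natrK_neq0 // subrr mulr0.
Qed.

Definition IJmx (a b : R) : 'M[R]_K := a%:M + b *: Jmx R K.

Lemma IJmxE (a b : R) (i j : 'I_K) : IJmx a b i j = (i == j)%:R * a + b.
Proof. by rewrite !mxE mulr1 mulr_natl. Qed.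

Lemma IJmx_mul_hcol (a b : R) (n : 'I_K) : IJmx a b *m hcol R n = a *: hcol R n.
Proof.
rewrite mulmxDl -scalemxAl.
have -> : Jmx R K *m hcol R n = 0.
  apply/matrixP => i j; rewrite ord1 !mxE -[RHS](sum_hcol n).
  by apply: eq_bigr => l _; rewrite mxE mul1r.
by rewrite scaler0 addr0 mul_scalar_mx.
Qed.

Lemma softmax_scale_hcol (a : R) (i n : 'I_K) : softmax (a *: hcol R n) i =
  (1 + (expR (a * c) - 1) * (i == n)%:R) / (expR (a * c) + (kR - 1)).
Proof.
pose E := expR (- (a * c / kR)).
have expE l : expR ((a *: hcol R n) l 0) = (1 + (expR (a * c) - 1) * (l == n)%:R) * E.
  rewrite mxE hcolE (_ : a * _ = a * c * (l == n)%:R + - (a * c / kR)); last by ring.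
  by rewrite expRD; case: (l == n); rewrite ?mulr1 ?mulr0 ?expR0 ?addr0 ?subrKC ?mul1r.
rewrite /softmax expE; under eq_bigr do rewrite expE.
rewrite -mulr_suml big_split /= sumr_const_ord -mulr_sumr sum_indicator1 !mulr1.
rewrite -mulf_div divff ?(lt0r_neq0 (expR_gt0 _)) // mulr1; congr (_ / _); ring.
Qed.

Lemma softmax_denom_gt0 (a : R) : 0 < expR (a * c) + (kR - 1).
Proof. by have := expR_gt0 (a * c); have := natrK_ge2; lra. Qed.

Definition phi (a : R) := c * kR / (expR (a * c) + (kR - 1)).

Lemma gradL_IJmx (a b : R) : gradL (IJmx a b) = IJmx (- phi a) (phi a / kR).
Proof.
apply/matrixP => i j; rewrite IJmxE gradLE.
under eq_bigr => n _ do rewrite IJmx_mul_hcol softmax_scale_hcol hcolE ![_ == n]eq_sym.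
set E := expR (a * c); set Z := E + (kR - 1).
rewrite (eq_bigr (fun n => (n == i)%:R * (c * ((E - 1) / Z - 1) * ((n == j)%:R - kR^-1)) +
                           c / Z * ((n == j)%:R - kR^-1))); last by move=> n _; ring.
rewrite big_split /= sum_indicator -mulr_sumr sumrB sum_indicator1 sumr_const_ord.
have Z_neq0 : E + (kR - 1) != 0 := lt0r_neq0 (softmax_denom_gt0 a).
rewrite /phi -/E /Z; field.
by rewrite Z_neq0 natrK_neq0 /= gt_eqF // sqrtr_gt0 subr_gt0 ltr1n.
Qed.

Definition reg_grad_diag (lambda a b : R) := lambda * (a + b) - phi a * (1 - kR^-1).
Definition reg_grad_off (lambda a b : R) := lambda * b + phi a / kR.

Lemma sign_step_IJmx (lambda eta a b : R) :
  let W := IJmx a b in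
  let sD := Num.sg (reg_grad_diag lambda a b) in
  let sO := Num.sg (reg_grad_off lambda a b) in
  W - eta *: sign_mx (gradL W + lambda *: W) = IJmx (a - eta * (sD - sO)) (b - eta * sO).
Proof.
rewrite /= gradL_IJmx; apply/matrixP => i j; rewrite !mxE.
case: (i == j); rewrite ?mulr1n ?mulr0n ?mulr1 ?add0r /reg_grad_diag /reg_grad_off.
  by rewrite (_ : - phi a + _ + _ = lambda * (a + b) - phi a * (1 - kR^-1)); ring.
by rewrite (_ : phi a / kR + _ = lambda * b + phi a / kR); ring.
Qed.

Fixpoint coef_seq (lambda : R) (eta : nat -> R) (t : nat) : R * R :=
  if t is t'.+1 then
    let: (a, b) := coef_seq lambda eta t' in
    let sD := Num.sg (reg_grad_diag lambda a b) in
    let sO := Num.sg (reg_grad_off lambda a b) in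
    (a - eta t' * (sD - sO), b - eta t' * sO)
  else (0, 0).

Lemma Wseq_IJmx (lambda : R) (eta : nat -> R) (t : nat) :
  Wseq K lambda eta t = IJmx (coef_seq lambda eta t).1 (coef_seq lambda eta t).2.
Proof.
elim: t => [|t IH] /=.
  by rewrite /IJmx scale0r addr0; apply/matrixP => i j; rewrite !mxE mul0rn.
by rewrite IH; case: (coef_seq lambda eta t) => a b; exact: sign_step_IJmx.
Qed.

Lemma frob_Jhat (A : 'M[R]_K) : frob A (Jhat R K) = kR^-1 * \sum_i \sum_k A k i.
Proof.
rewrite /frob /mxtrace mulr_sumr; apply: eq_bigr => i _.
rewrite mxE mulr_sumr; apply: eq_bigr => k _.
by rewrite !mxE mulr1 mulrC.
Qed.

Lemma sum_col_IJmx (a b : R) (l : 'I_K) : \sum_k IJmx a b k l = a + kR * b.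
Proof.
under eq_bigr do rewrite IJmxE.
by rewrite big_split /= -mulr_suml sum_indicator1 mul1r sumr_const_ord.
Qed.

Lemma frob_IJmx_Jhat (a b : R) :
  frob (IJmx a b *m (IJmx a b)^T) (Jhat R K) = (a + kR * b) ^+ 2.
Proof.
rewrite frob_Jhat.
have row_sum i : \sum_k (IJmx a b *m (IJmx a b)^T) k i = (a + kR * b) * \sum_l IJmx a b i l.
  under eq_bigr do rewrite mxE.
  rewrite exchange_big mulr_sumr; apply: eq_bigr => l _.
  by under eq_bigr do rewrite [_^T _ _]mxE; rewrite -mulr_suml sum_col_IJmx.
under eq_bigr do rewrite row_sum.
rewrite -mulr_sumr exchange_big /=.
under eq_bigr do rewrite sum_col_IJmx.
by rewrite sumr_const_ord; field; exact: natrK_neq0.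
Qed.

Lemma alpha_coef_seq (lambda : R) (eta : nat -> R) (t : nat) :
  alpha K lambda eta t = ((coef_seq lambda eta t).1 + kR * (coef_seq lambda eta t).2) ^+ 2.
Proof. by rewrite /alpha Wseq_IJmx frob_IJmx_Jhat. Qed.

Lemma phi0 : phi 0 = c.
Proof. by rewrite /phi mul0r expR0 addrCA subrr addr0 mulfK ?natrK_neq0. Qed.

Lemma phi_nonincreasing (a a' : R) : a <= a' -> phi a' <= phi a.
Proof.
move=> le_aa'; rewrite /phi ler_pdivrMr ?softmax_denom_gt0 // mulrAC.
rewrite ler_pdivlMr ?softmax_denom_gt0 // ler_pM2l ?mulr_gt0 ?c_gt0 //; last first.
  by have := natrK_ge2; lra.
by rewrite lerD2r ler_expR ler_pM2r ?c_gt0.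
Qed.

Lemma phi_decrement_le (a d : R) : 0 <= d <= 1 / 2 -> phi a - phi (a + d) <= 2 * kR * d.
Proof.
move=> /andP[d_ge0 d_le].
have c_pos := c_gt0; have c_le := c_le1; have K_ge := natrK_ge2.
set E := expR (a * c); set x := expR (d * c).
have E_gt0 : 0 < E := expR_gt0 _.
have x_ge1 : 1 <= x by rewrite -expR0 ler_expR mulr_ge0.
have Ex_gt0 : 0 < E * x by rewrite mulr_gt0 // (lt_le_trans ltr01).
have x_le : x - 1 <= 2 * (d * c) by apply: expR_sub1_le2x; apply/andP; split; nra.
have -> : phi a - phi (a + d) = c * kR * (E / (E + (kR - 1))) * ((x - 1) / (E * x + (kR - 1))).
  rewrite /phi mulrDl expRD -/E -/x; field.
  rewrite !lt0r_neq0 ?sqrtr_gt0 //; nra.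
have u_ge0 : 0 <= E / (E + (kR - 1)) by rewrite divr_ge0 //; lra.
have u_le1 : E / (E + (kR - 1)) <= 1 by rewrite ler_pdivrMr ?mul1r; lra.
have v_ge0 : 0 <= (x - 1) / (E * x + (kR - 1)) by rewrite divr_ge0 //; nra.
have v_le : (x - 1) / (E * x + (kR - 1)) <= x - 1 by rewrite ler_pdivrMr; nra.
have uv_le : E / (E + (kR - 1)) * ((x - 1) / (E * x + (kR - 1))) <= 2 * (d * c) by nra.
have c_uv_le : c * (E / (E + (kR - 1)) * ((x - 1) / (E * x + (kR - 1)))) <= 2 * d.
  have := ler_wpM2l (ltW c_pos) uv_le; nra.
rewrite -mulrA (mulrC c) -mulrA; nra.
Qed.

Lemma phi_shift_bound (a d : R) : `|d| <= 1 / 2 -> `|phi (a + d) - phi a| <= 2 * kR * `|d|.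
Proof.
have [d_ge0|d_lt0] := leP 0 d => d_le.
  have mono : phi (a + d) <= phi a by apply: phi_nonincreasing; rewrite lerDl.
  rewrite ger0_norm // in d_le *; rewrite ler0_norm ?subr_le0 // opprB.
  by apply: phi_decrement_le; rewrite d_ge0.
have mono : phi a <= phi (a + d) by apply: phi_nonincreasing; rewrite gerDl ltW.
rewrite ltr0_norm // in d_le *; rewrite ger0_norm ?subr_ge0 //.
have := @phi_decrement_le (a + d) (- d); rewrite addrK; apply.
by rewrite oppr_ge0 ltW.
Qed.

Lemma phi_step_bound (eta a x y : R) : 0 <= eta <= 1 / 4 ->
  `|phi (a - eta * (Num.sg x - Num.sg y)) - phi a| <= 4 * kR * eta.
Proof.
move=> /andP[eta_ge0 eta_le].
have /andP[? ?] := sgr_bounds x; have /andP[? ?] := sgr_bounds y.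
have shift_le : `|- (eta * (Num.sg x - Num.sg y))| <= 2 * eta.
  by rewrite normrN ler_norml; apply/andP; split; nra.
have K_ge := natrK_ge2.
have := phi_shift_bound a (d := - (eta * (Num.sg x - Num.sg y))); nra.
Qed.

(* Moving a by -eta (sg x - sg y) changes phi with the sign of x and against the
   sign of y, i.e. in the direction that helps both entries contract. *)
Lemma phi_step_sign (eta a x y : R) : 0 <= eta ->
  0 <= x * (phi (a - eta * (Num.sg x - Num.sg y)) - phi a) /\
  0 <= y * - (phi (a - eta * (Num.sg x - Num.sg y)) - phi a).
Proof.
move=> eta_ge0.
have up s : 0 <= s -> 0 <= phi (a - eta * s) - phi a.
  by move=> s_ge0; rewrite subr_ge0 phi_nonincreasing // gerBl mulr_ge0.
have down s : s <= 0 -> phi (a - eta * s) - phi a <= 0.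
  by move=> s_le0; rewrite subr_le0 phi_nonincreasing //; nra.
have /andP[? ?] := sgr_bounds x; have /andP[? ?] := sgr_bounds y.
split.
  case: (sgrP x) => [->|x_gt0|x_lt0]; first by rewrite mul0r.
    by apply: mulr_ge0; [exact: ltW | apply: up; lra].
  by have := down (-1 - Num.sg y); nra.
case: (sgrP y) => [->|y_gt0|y_lt0]; first by rewrite mul0r.
  by have := down (Num.sg x - 1); nra.
by have := up (Num.sg x - -1); nra.
Qed.

Lemma reg_grad_step (lambda eta m a b : R) : 0 < lambda -> 0 <= eta <= 1 / 4 ->
  (lambda + 4 * kR) * eta <= m - lambda * eta ->
  `|reg_grad_diag lambda a b| <= m -> `|reg_grad_off lambda a b| <= m ->
  let sD := Num.sg (reg_grad_diag lambda a b) in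
  let sO := Num.sg (reg_grad_off lambda a b) in
  `|reg_grad_diag lambda (a - eta * (sD - sO)) (b - eta * sO)| <= m - lambda * eta /\
  `|reg_grad_off lambda (a - eta * (sD - sO)) (b - eta * sO)| <= m - lambda * eta.
Proof.
move=> lambda_gt0 /[dup] eta_range /andP[eta_ge0 _] small D_le O_le sD sO.
have [D_delta O_delta] :=
  phi_step_sign a (reg_grad_diag lambda a b) (reg_grad_off lambda a b) eta_ge0.
have delta_le := phi_step_bound a (reg_grad_diag lambda a b) (reg_grad_off lambda a b) eta_range.
set D := reg_grad_diag lambda a b in D_le D_delta delta_le *.
set O := reg_grad_off lambda a b in O_le O_delta delta_le *.
set delta := phi _ - phi a in D_delta O_delta delta_le.
have K_ge := natrK_ge2; have norm_delta_ge0 := normr_ge0 delta.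
have [invK_gt0 invK_le] : 0 < kR^-1 /\ kR^-1 <= 1 / 2.
  split; first by rewrite invr_gt0; lra.
  by rewrite -[_ / 2]invf_div ?div1r ?lef_pV2 ?posrE; lra.
have -> : reg_grad_diag lambda (a - eta * (sD - sO)) (b - eta * sO) =
    D - lambda * eta * sD - delta * (1 - kR^-1).
  by rewrite /D /delta /reg_grad_diag; ring.
have -> : reg_grad_off lambda (a - eta * (sD - sO)) (b - eta * sO) =
    O - lambda * eta * sO - - (delta / kR).
  by rewrite /O /delta /reg_grad_off; ring.
split; apply: (sign_step_contraction (C := 4 * kR)) => //; try lra.
- by rewrite normrM (ger0_norm (_ : 0 <= 1 - kR^-1)); nra.
- by rewrite mulrA; apply: mulr_ge0 => //; lra.
- by rewrite normrN normrM (ger0_norm (ltW invK_gt0)); nra.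
- by rewrite -mulNr mulrA; apply: mulr_ge0 => //; exact: ltW.
Qed.

Section Convergence.
Variable lambda : R.
Hypothesis lambda_gt0 : 0 < lambda.
(* lra/nra ignore section hypotheses, hence the explicit [have := lambda_gt0]. *)

Let rho := (2 * lambda + 4 * kR)^-1.
Let q := 1 - lambda * rho.

(* With this choice, (lambda + 4 K) eta_t = c q^t - lambda eta_t = c q^(t+1): the
   hypothesis of [reg_grad_step] holds with equality for m = c q^t. *)
Definition lr_schedule := geometric (rho * c) q.
Local Notation eta := lr_schedule.
Let coef t := coef_seq lambda eta t.

Lemma rho_gt0 : 0 < rho.
Proof. by rewrite invr_gt0; have := lambda_gt0; have := natrK_ge2; lra. Qed.

Lemma rho_unit : (2 * lambda + 4 * kR) * rho = 1.
Proof. by rewrite mulfV // lt0r_neq0 //; have := lambda_gt0; have := natrK_ge2; lra. Qed.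

Lemma q_gt0 : 0 < q.
Proof.
by have := rho_unit; have := rho_gt0; have := lambda_gt0; have := natrK_ge2; rewrite /q; nra.
Qed.

Lemma q_lt1 : q < 1.
Proof. by have := rho_gt0; have := lambda_gt0; rewrite /q; nra. Qed.

Lemma lr_schedule_gt0 t : 0 < eta t.
Proof. by rewrite /lr_schedule /geometric /= !mulr_gt0 ?exprn_gt0 ?rho_gt0 ?c_gt0 ?q_gt0. Qed.

Lemma lr_schedule_cvg0 : eta @ \oo --> (0 : R).
Proof. by apply: cvg_geometric; rewrite gtr0_norm ?q_gt0 ?q_lt1. Qed.

Lemma reg_grad_geometric t :
  `|reg_grad_diag lambda (coef t).1 (coef t).2| <= c * q ^+ t /\
  `|reg_grad_off lambda (coef t).1 (coef t).2| <= c * q ^+ t.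
Proof.
have K_ge := natrK_ge2; have c_pos := c_gt0; have c_le := c_le1.
elim: t => [|t [D_le O_le]].
  rewrite /coef /= /reg_grad_diag /reg_grad_off phi0.
  rewrite !(mulr0, addr0, add0r, expr0, mulr1).
  have [invK_gt0 invK_le1] : 0 < kR^-1 /\ kR^-1 <= 1.
    by split; [rewrite invr_gt0 | rewrite invf_le1]; lra.
  rewrite normrN !ger0_norm; [split|..]; nra.
have qt_ge0 : 0 <= q ^+ t := exprn_ge0 _ (ltW q_gt0).
have qt_le1 : q ^+ t <= 1 by rewrite exprn_ile1 ?ltW ?q_gt0 ?q_lt1.
have eta_t : eta t = rho * c * q ^+ t by [].
have rho_le : rho <= 1 / 8.
  by have := rho_unit; have := rho_gt0; have := lambda_gt0; nra.
have step_eq : c * q ^+ t.+1 = c * q ^+ t - lambda * eta t by rewrite eta_t exprS /q; ring.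
have small : (lambda + 4 * kR) * eta t = c * q ^+ t - lambda * eta t.
  rewrite eta_t (_ : _ * _ = (2 * lambda + 4 * kR) * rho * (c * q ^+ t) -
                             lambda * (rho * c * q ^+ t)); last by ring.
  by rewrite rho_unit mul1r.
have eta_ge0 : 0 <= eta t := ltW (lr_schedule_gt0 t).
have eta_le : eta t <= 1 / 4.
  have : c * q ^+ t <= 1 by nra.
  have : 0 <= c * q ^+ t by rewrite mulr_ge0 // ltW.
  rewrite eta_t -mulrA; nra.
rewrite step_eq; move: D_le O_le small; rewrite /coef /=.
case: (coef_seq lambda eta t) => a b /= D_le O_le small.
apply: reg_grad_step => //; first by rewrite eta_le eta_ge0.
by rewrite small.
Qed.

Lemma alpha_le_geometric t : alpha K lambda eta t <= (kR * c / lambda) ^+ 2 * (q ^+ 2) ^+ t.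
Proof.
have [D_le O_le] := reg_grad_geometric t.
rewrite alpha_coef_seq -/(coef t); move: D_le O_le.
case: (coef t) => a b /= D_le O_le.
have K_ge := natrK_ge2; have l_gt0 := lambda_gt0.
have sum_le : `|lambda * (a + kR * b)| <= kR * c * q ^+ t.
  have -> : lambda * (a + kR * b) = reg_grad_diag lambda a b + (kR - 1) * reg_grad_off lambda a b.
    by rewrite /reg_grad_diag /reg_grad_off; field; exact: natrK_neq0.
  rewrite (le_trans (ler_normD _ _)) // normrM (ger0_norm (_ : 0 <= kR - 1)); nra.
move: sum_le; rewrite ler_norml => /andP[lo hi].
rewrite -exprM mulnC exprM -exprMn mulrAC expr_div_n ler_pdivlMr ?exprn_gt0 //.
nra.
Qed.

Lemma alpha_cvg0 : alpha K lambda eta @ \oo --> (0 : R).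
Proof.
have q2_lt1 : `|q ^+ 2| < 1.
  by rewrite ger0_norm ?exprn_ge0 ?exprn_ilt1 ?ltW ?q_gt0 ?q_lt1.
apply: (squeeze_cvgr _ (cvg_cst 0) (cvg_geometric ((kR * c / lambda) ^+ 2) q2_lt1)).
apply: nearW => t; rewrite /geometric /= alpha_le_geometric andbT alpha_coef_seq.
exact: sqr_ge0.
Qed.
End Convergence.
End SimplexETF.

Theorem mainTheorem5 (R : realType) (K : nat) (lambda : R) :
  (2 <= K)%N -> 0 < lambda ->
  exists eta : nat -> R,
    (forall t, 0 < eta t) /\
    eta @ \oo --> (0 : R) /\
    alpha K lambda eta @ \oo --> (0 : R).
Proof.
move=> K_ge2 lambda_gt0; exists (lr_schedule K lambda).
split; first exact: lr_schedule_gt0.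
by split; [exact: lr_schedule_cvg0 | exact: alpha_cvg0].
Qed.
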